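(* Let $G$ be the cube graph $Q_3$, let $P$ be a pot realizing $G$ according to Scenario 3, and let $\lambda$ be an assembly design of $G$ with $P_\lambda(G)\subseteq P$. Then there are at most two pairwise disjoint pairs $\{v_i,v_j\}$ of distinct vertices of $G$ with $\lambda(v_i)=\lambda(v_j)$; that is, there do not exist three pairwise disjoint such pairs.
   Context: Fix a set $\Sigma$ of symbols (bond-edge types) and a disjoint copy $\hat\Sigma=\{\hat a:a\in\Sigma\}$ with $\hat{\hat a}=a$; elements of $\Sigma\cup\hat\Sigma$ are cohesive-end types. A tile is a finite multiset of cohesive-end types. A pot is a finite set $P$ of tiles such that whenever $x$ occurs in a tile of $P$, $\hat x$ occurs in some tile of $P$. Graphs are finite, loops and multiple edges allowed. An assembly design of a graph $H$ is a labeling $\lambda$ of the half-edges of $H$ by cohesive-end types such that the two half-edges of each edge receive complementary labels $x,\hat x$; $\lambda(v)=t_v$ is the multiset of labels of half-edges at $v$, and $P_\lambda(H)=\{t_v\}$. $P$ realizes $H$ ($H\in\mathcal{O}(P)$) if some assembly design $\lambda$ has $P_\lambda(H)\subseteq P$. $P$ realizes $G$ according to Scenario 3 if $G\in\mathcal{O}(P)$, every $H\in\mathcal{O}(P)$ has $\#V(H)\ge\#V(G)$, and every $H\in\mathcal{O}(P)$ with $\#V(H)=\#V(G)$ is isomorphic to $G$. *)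

From mathcomp Require Import all_boot.
Set Implicit Arguments. Unset Strict Implicit. Unset Printing Implicit Defensive.

(* Cohesive-end types over a symbol type S: (a, false) = a, (a, true) = hat a. *)
Definition cend (S : eqType) := (S * bool)%type.
Definition hat (S : eqType) (x : cend S) : cend S := (x.1, ~~ x.2).

(* A tile is a finite multiset of cohesive-end types, represented by a sequence;
   two sequences denote the same tile iff they are permutations of each other
   (perm_eq).  A pot is a finite set of tiles, represented by a sequence. *)
Definition tile (S : eqType) := seq (cend S).

Definition tile_in (S : eqType) (t : tile S) (P : seq (tile S)) : bool :=
  has (perm_eq t) P.

Definition is_pot (S : eqType) (P : seq (tile S)) : Prop :=
  forall t x, t \in P -> x \in t -> exists2 t', t' \in P & hat x \in t'.

(* A finite multigraph (loops and multiple edges allowed) on vertex set 'I_n is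
   given by a list of edges E; edge number i is nth _ E i, its first half-edge
   is at (nth _ E i).1 and its second at (nth _ E i).2.
   An assembly design assigns to edge i the label lab i on its first half-edge,
   and hat (lab i) on its second half-edge (complementary labels). *)
Definition tile_at (S : eqType) (n : nat) (E : seq ('I_n * 'I_n))
    (lab : nat -> cend S) (v : 'I_n) : tile S :=
  flatten [seq let e := nth (v, v) E i in
               (if e.1 == v then [:: lab i] else [::]) ++
               (if e.2 == v then [:: hat (lab i)] else [::])
          | i <- iota 0 (size E)].

Definition design_in (S : eqType) (n : nat) (E : seq ('I_n * 'I_n))
    (lab : nat -> cend S) (P : seq (tile S)) : Prop :=
  forall v : 'I_n, tile_in (tile_at E lab v) P.

Definition realizes (S : eqType) (P : seq (tile S)) (n : nat)
    (E : seq ('I_n * 'I_n)) : Prop :=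
  exists lab : nat -> cend S, design_in E lab P.

(* number of (undirected) edges joining u and v (loops counted once each) *)
Definition mult (n : nat) (E : seq ('I_n * 'I_n)) (u v : 'I_n) : nat :=
  count (fun e => (e == (u, v)) || (e == (v, u))) E.

Definition mg_iso (n m : nat) (E : seq ('I_n * 'I_n)) (F : seq ('I_m * 'I_m))
    : Prop :=
  exists f : 'I_n -> 'I_m, bijective f /\
    forall u v : 'I_n, mult E u v = mult F (f u) (f v).

(* Scenario 3 (graphs are taken to have at least one vertex). *)
Definition scenario3 (S : eqType) (P : seq (tile S)) (n : nat)
    (G : seq ('I_n * 'I_n)) : Prop :=
  realizes P G /\
  (forall (m : nat) (H : seq ('I_m * 'I_m)), 0 < m -> realizes P H -> n <= m) /\
  (forall H : seq ('I_n * 'I_n), realizes P H -> mg_iso H G).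

(* The cube graph Q_3 on vertices 0..7 (binary strings), edges between
   vertices differing in exactly one bit. *)
Definition Q3 : seq ('I_8 * 'I_8) :=
  [seq (inord p.1, inord p.2) | p <- [:: (0,1); (0,2); (0,4); (1,3); (1,5);
     (2,3); (2,6); (3,7); (4,5); (4,6); (5,7); (6,7)]].

From mathcomp Require Import all_boot zmodp.
Set Implicit Arguments. Unset Strict Implicit. Unset Printing Implicit Defensive.

(* If two half-edges on different edges carry the same cohesive-end type, exchanging
   the far ends of their two edges leaves every vertex tile unchanged, so P realizes
   the rewired graph; by Scenario 3 it is again isomorphic to Q3 and in particular has
   no loop, no multiple edge and no triangle.  Whenever the rewired graph does have one,
   the two half-edges must therefore carry different types.  Two vertices with equal
   tiles yield one of the 3! bijections between their half-edges preserving types.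
   Identifying types along the bijections of three disjoint such vertex pairs (and, by
   complementarity, along the opposite halves) always forces a half-edge to share its
   type with its opposite, or a forbidden pair to share a type; this finite search is
   carried out by [vm_compute]. *)

(* [(k, false)] is the first half of edge [k], labelled [lab k]; [(k, true)] is its
   second half, labelled [hat (lab k)]. *)
Definition halfedge := (nat * bool)%type.

Definition opp (h : halfedge) : halfedge := (h.1, ~~ h.2).

Definition halves T (E : seq T) : seq halfedge :=
  [seq (k, s) | k <- iota 0 (size E), s <- [:: false; true]].

Lemma halves_lt T (E : seq T) h : h \in halves E -> h.1 < size E.
Proof. by case/allpairsP => -[k s] [+ _ ->]; rewrite mem_iota. Qed.

Definition halves_at n (E : seq ('I_n * 'I_n)) (v : 'I_n) : seq halfedge :=
  flatten [seq let e := nth (v, v) E i in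
               (if e.1 == v then [:: (i, false)] else [::]) ++
               (if e.2 == v then [:: (i, true)] else [::])
          | i <- iota 0 (size E)].

Section Labels.
Variables (S : eqType) (lab : nat -> cend S).

Lemma hatK : involutive (@hat S).
Proof. by case=> a b; rewrite /hat negbK. Qed.

Lemma hat_neq (x : cend S) : hat x != x.
Proof. by case: x => a []; rewrite /hat xpair_eqE eqxx. Qed.

Definition half_label (h : halfedge) : cend S :=
  if h.2 then hat (lab h.1) else lab h.1.

Lemma half_label_opp h : half_label (opp h) = hat (half_label h).
Proof. by case: h => k []; rewrite /half_label /= ?hatK. Qed.

Lemma tile_at_halves n (E : seq ('I_n * 'I_n)) v :
  tile_at E lab v = map half_label (halves_at E v).
Proof.
rewrite /tile_at /halves_at map_flatten -map_comp; congr flatten.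
by apply: eq_map => i /=; rewrite map_cat; case: ifP; case: ifP.
Qed.

Definition labels_agree (C : seq (halfedge * halfedge)) :=
  {in C, forall p, half_label p.1 = half_label p.2}.

End Labels.

Definition matchings (T : eqType) (s t : seq T) : seq (seq (T * T)) :=
  [seq zip s t' | t' <- permutations t].

Section Matchings.
Variables (T U : eqType) (f : T -> U).

Lemma perm_map_lift s t :
  perm_eq (map f s) (map f t) -> exists2 t', perm_eq t' t & map f t' = map f s.
Proof.
elim: s t => [|x s IHs] t.
  by move/perm_size; rewrite !size_map => /esym/size0nil ->; exists [::].
move=> st; have /mapP[y yt fxy] : f x \in map f t by rewrite -(perm_mem st) mem_head.
have /IHs[t' t't ft's] : perm_eq (map f s) (map f (rem y t)).
  have : perm_eq (map f (x :: s)) (map f (y :: rem y t)).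
    by rewrite (perm_trans st) // perm_map // perm_to_rem.
  by rewrite /= fxy perm_cons.
exists (y :: t'); last by rewrite /= ft's fxy.
by rewrite perm_sym (perm_trans (perm_to_rem yt)) // perm_cons perm_sym.
Qed.

Lemma zip_map_eq s t :
  map f s = map f t -> {in zip s t, forall p, f p.1 = f p.2}.
Proof.
elim: s t => [|x s IHs] [|y t] //= [fxy /IHs fst] p.
by rewrite inE => /orP[/eqP -> //|/fst].
Qed.

Lemma matchings_perm_map s t :
  perm_eq (map f s) (map f t) ->
  exists2 c, c \in matchings s t & {in c, forall p, f p.1 = f p.2}.
Proof.
case/perm_map_lift => t' t't ft's; exists (zip s t'); last exact: zip_map_eq.
by apply: map_f; rewrite mem_permutations.
Qed.

End Matchings.

(* The [let]s make [vm_compute] evaluate [cls a] and [cls b] once, when the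
   class function is built, rather than at every later lookup. *)
Definition unite (cls : halfedge -> halfedge) (a b : halfedge) : halfedge -> halfedge :=
  let ca := cls a in let cb := cls b in
  fun h => let ch := cls h in if ch == ca then cb else ch.

Definition unite_pair (cls : halfedge -> halfedge) (p : halfedge * halfedge) :
    halfedge -> halfedge :=
  unite (unite cls p.1 p.2) (opp p.1) (opp p.2).

Definition closure (C : seq (halfedge * halfedge)) : halfedge -> halfedge :=
  foldl unite_pair id C.

Definition refutes (hs : seq halfedge) (B C : seq (halfedge * halfedge)) : bool :=
  let cls := closure C in
  has (fun h => cls h == cls (opp h)) hs || has (fun p => cls p.1 == cls p.2) B.

Section Closure.
Variables (S : eqType) (lab : nat -> cend S).
Local Notation L := (half_label lab).

Definition refines_labels (cls : halfedge -> halfedge) :=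
  forall x y, cls x = cls y -> L x = L y.

Lemma unite_refines_labels cls a b :
  refines_labels cls -> L a = L b -> refines_labels (unite cls a b).
Proof.
move=> cls_ok Lab x y; rewrite /unite.
case: (eqVneq (cls x) (cls a)) => [/cls_ok ->|_];
  case: (eqVneq (cls y) (cls a)) => [/cls_ok ->|_] //.
all: by rewrite ?Lab; apply: cls_ok.
Qed.

Lemma unite_pair_refines_labels cls p :
  refines_labels cls -> L p.1 = L p.2 -> refines_labels (unite_pair cls p).
Proof.
move=> cls_ok Lp; apply: unite_refines_labels; first exact: unite_refines_labels.
by rewrite !half_label_opp Lp.
Qed.

Lemma closure_refines_labels C : labels_agree lab C -> refines_labels (closure C).
Proof.
rewrite /closure; have : refines_labels id by move=> x y ->.
elim: C (@id halfedge) => [|p C IHC] cls cls_ok //= agree.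
apply: IHC => [|q qC]; last by apply: agree; rewrite inE qC orbT.
by apply: unite_pair_refines_labels => //; apply: agree; rewrite mem_head.
Qed.

Lemma refutes_sound hs B C :
  {in B, forall p, L p.1 != L p.2} -> labels_agree lab C -> ~~ refutes hs B C.
Proof.
move=> LB /closure_refines_labels cC; apply/norP; split; apply/hasPn.
- move=> h _; apply/eqP => /cC; rewrite half_label_opp => /esym/eqP.
  by rewrite (negbTE (hat_neq _)).
- by move=> p /LB /eqP LBp; apply/eqP => /cC.
Qed.

End Closure.

Definition multiplicity (T : eqType) (H : seq (T * T)) (u v : T) : nat :=
  count (fun e => (e == (u, v)) || (e == (v, u))) H.

Definition degenerate (T : eqType) (vs : seq T) (H : seq (T * T)) : bool :=
  has (fun u => 0 < multiplicity H u u) vs ||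
  has (fun u => has (fun v => (u != v) && (1 < multiplicity H u v)) vs) vs ||
  has (fun u => has (fun v => has (fun w =>
    [&& u != v, v != w, w != u, 0 < multiplicity H u v,
        0 < multiplicity H v w & 0 < multiplicity H w u]) vs) vs) vs.

Lemma degenerate_eq_mem (T : eqType) (vs ws : seq T) H :
  vs =i ws -> degenerate vs H = degenerate ws H.
Proof.
move=> vw; rewrite /degenerate !(eq_has_r vw).
by congr (_ || _ || _); apply: eq_has => u /=; rewrite !(eq_has_r vw) //;
  apply: eq_has => v /=; rewrite (eq_has_r vw).
Qed.

Lemma degenerate_transport (T T' : eqType) (f : T -> T') vs H G :
  injective f -> (forall u v, multiplicity G (f u) (f v) = multiplicity H u v) ->
  degenerate (map f vs) G = degenerate vs H.
Proof.
move=> injf fGH; rewrite /degenerate !has_map.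
congr (_ || _ || _); apply: eq_has => u /=; rewrite ?fGH ?has_map //;
  apply: eq_has => v /=; rewrite ?has_map ?(inj_eq injf) ?fGH //.
by apply: eq_has => w /=; rewrite !(inj_eq injf) !fGH.
Qed.

Lemma multiplicity_map (T T' : eqType) (f : T -> T') H u v : injective f ->
  multiplicity [seq (f e.1, f e.2) | e <- H] (f u) (f v) = multiplicity H u v.
Proof.
move=> injf; rewrite /multiplicity count_map; apply: eq_count => -[x y] /=.
by rewrite !xpair_eqE !(inj_eq injf).
Qed.

(* Vertices are compared as natural numbers: comparing ordinals under [vm_compute]
   is much slower. *)
Definition degenerate_graph n (E : seq ('I_n * 'I_n)) : bool :=
  degenerate (iota 0 n) [seq (val e.1, val e.2) | e <- E].

Lemma degenerate_graphE n (E : seq ('I_n * 'I_n)) :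
  degenerate_graph E = degenerate (enum 'I_n) E.
Proof.
rewrite /degenerate_graph -val_enum_ord; apply: degenerate_transport => [|u v].
  exact: val_inj.
exact: multiplicity_map val_inj.
Qed.

Lemma degenerate_graph_iso n m (H : seq ('I_n * 'I_n)) (G : seq ('I_m * 'I_m)) :
  mg_iso H G -> degenerate_graph H = degenerate_graph G.
Proof.
case=> f [bijf multHG]; rewrite !degenerate_graphE.
have multGH u v : multiplicity G (f u) (f v) = multiplicity H u v := esym (multHG u v).
rewrite -(degenerate_transport (enum 'I_n) (bij_inj bijf) multGH).
apply: degenerate_eq_mem => y; rewrite mem_enum.
by case: bijf => g _ gK; rewrite -[y]gK map_f ?mem_enum.
Qed.

Lemma sum_eq_except2 m (F G : 'I_m -> nat) i j : i != j ->
  (forall k, k != i -> k != j -> F k = G k) -> F i + F j = G i + G j ->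
  \sum_k F k = \sum_k G k.
Proof.
move=> ij FG FGij; rewrite (bigD1 i) // [RHS](bigD1 i) //= (bigD1 j) 1?eq_sym //.
rewrite [in RHS](bigD1 j) 1?eq_sym //= !addnA FGij; congr (_ + _).
by apply: eq_bigr => k /andP[ki kj]; apply: FG.
Qed.

Section Rewiring.
Variable n : nat.
Local Notation V := 'I_n.+1.

Definition endpoint (e : V * V) (s : bool) : V := if s then e.2 else e.1.

Definition set_endpoint (e : V * V) (s : bool) (v : V) : V * V :=
  if s then (e.1, v) else (v, e.2).

Lemma endpoint_set e s v : endpoint (set_endpoint e s v) s = v.
Proof. by case: s. Qed.

Lemma endpoint_set_opp e s v : endpoint (set_endpoint e s v) (~~ s) = endpoint e (~~ s).
Proof. by case: s. Qed.

Definition half_endpoint (E : seq (V * V)) (h : halfedge) : V :=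
  endpoint (nth (ord0, ord0) E h.1) h.2.

Definition rewire (E : seq (V * V)) (h1 h2 : halfedge) : seq (V * V) :=
  mkseq (fun k => let e := nth (ord0, ord0) E k in
    if k == h1.1 then set_endpoint e (~~ h1.2) (half_endpoint E (opp h2))
    else if k == h2.1 then set_endpoint e (~~ h2.2) (half_endpoint E (opp h1))
    else e) (size E).

Variables (S : eqType) (lab : nat -> cend S).
Local Notation L := (half_label lab).

Definition edge_count (a : pred (cend S)) (v : V) (e : V * V) k : nat :=
  ((endpoint e false == v) && a (L (k, false))) +
  ((endpoint e true == v) && a (L (k, true))).

Lemma edge_count_side a v e k s : edge_count a v e k =
  ((endpoint e s == v) && a (L (k, s))) + ((endpoint e (~~ s) == v) && a (L (k, ~~ s))).
Proof. by case: s; rewrite // addnC. Qed.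

Lemma count_tile_at a (E : seq (V * V)) v :
  count a (tile_at E lab v) = \sum_(k < size E) edge_count a v (nth (ord0, ord0) E k) k.
Proof.
rewrite /tile_at count_flatten -map_comp sumnE big_map.
rewrite [iota _ _](_ : _ = index_iota 0 (size E)) ?big_mkord; last first.
  by rewrite /index_iota subn0.
apply: eq_bigr => k _ /=; rewrite (set_nth_default (ord0, ord0)) // count_cat.
rewrite /edge_count /endpoint /=; case: (nth _ E k) => x y /=.
by case: (x == v); case: (y == v); rewrite /= ?addn0.
Qed.

Lemma tile_at_rewire E h1 h2 v :
  h1.1 < size E -> h2.1 < size E -> h1.1 != h2.1 -> L h1 = L h2 ->
  perm_eq (tile_at (rewire E h1 h2) lab v) (tile_at E lab v).
Proof.
case: h1 h2 => i s1 [j s2] /= ltiE ltjE neij L12.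
apply/permP => a; rewrite !count_tile_at size_mkseq.
apply: (@sum_eq_except2 _ _ _ (Ordinal ltiE) (Ordinal ltjE)) => [//|k ki kj|] /=.
  by rewrite -!val_eqE /= in ki kj; rewrite nth_mkseq // (negbTE ki) (negbTE kj).
rewrite !nth_mkseq //= eqxx eq_sym (negbTE neij) eqxx.
rewrite !(edge_count_side _ _ _ i (~~ s1)) !(edge_count_side _ _ _ j (~~ s2)).
rewrite !endpoint_set !endpoint_set_opp !negbK.
have L1 : L (i, ~~ s1) = hat (L (i, s1)) by exact: half_label_opp (i, s1).
have L2 : L (j, ~~ s2) = hat (L (j, s2)) by exact: half_label_opp (j, s2).
rewrite /half_endpoint /= L1 L2 L12 addnACA [RHS]addnACA; congr (_ + _); exact: addnC.
Qed.

Lemma design_in_rewire P E h1 h2 :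
  h1.1 < size E -> h2.1 < size E -> h1.1 != h2.1 -> L h1 = L h2 ->
  design_in E lab P -> design_in (rewire E h1 h2) lab P.
Proof.
move=> lt1 lt2 ne12 L12 dE v.
by rewrite /tile_in (eq_has (permPl (tile_at_rewire v lt1 lt2 ne12 L12))); apply: dE.
Qed.

End Rewiring.

Section Twins.
Variable n : nat.
Local Notation V := 'I_n.+1.

Definition forbidden_pairs (E : seq (V * V)) : seq (halfedge * halfedge) :=
  [seq p <- [seq (x, y) | x <- halves E, y <- halves E]
     | (p.1.1 != p.2.1) && degenerate_graph (rewire E p.1 p.2)].

Definition vertex_pairs : seq (V * V) :=
  [seq ab : V * V <- [seq (a, b) | a <- mkseq inZp n.+1, b <- mkseq inZp n.+1]
     | ab.1 < ab.2].

Definition twin_candidates (E : seq (V * V)) (B : seq (halfedge * halfedge)) :=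
  [seq x <- [seq (ab, c) | ab <- vertex_pairs,
                           c <- matchings (halves_at E ab.1) (halves_at E ab.2)]
     | ~~ refutes (halves E) B x.2].

(* [if] rather than [==>]: [vm_compute] evaluates both arguments of [implb]. *)
Definition three_twins_refuted (E : seq (V * V)) : bool :=
  let B := forbidden_pairs E in
  let T := twin_candidates E B in
  all (fun x1 => all (fun x2 => all (fun x3 =>
    if uniq [:: x1.1.1; x1.1.2; x2.1.1; x2.1.2; x3.1.1; x3.1.2]
    then refutes (halves E) B (x1.2 ++ x2.2 ++ x3.2) else true) T) T) T.

Variables (S : eqType) (lab : nat -> cend S) (P : seq (tile S)) (E : seq (V * V)).
Local Notation L := (half_label lab).

Lemma forbidden_pairs_labels :
  (forall H : seq (V * V), realizes P H -> mg_iso H E) -> design_in E lab P ->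
  ~~ degenerate_graph E -> {in forbidden_pairs E, forall p, L p.1 != L p.2}.
Proof.
move=> isoE dE ndE p; rewrite mem_filter.
case/andP=> /andP[ne12 deg] /allpairsP[[h1 h2] [/halves_lt lt1 /halves_lt lt2 pE]].
subst p; apply/eqP => L12; move: ndE.
rewrite -(degenerate_graph_iso (isoE (rewire E h1 h2) _)) => [/negP[]|].
  exact: deg.
by exists lab; apply: design_in_rewire.
Qed.

Lemma mem_vertex_pairs (a b : V) : a < b -> (a, b) \in vertex_pairs.
Proof.
have memV (v : V) : v \in mkseq inZp n.+1.
  by apply/mapP; exists (val v); rewrite ?valZpK // mem_iota ltn_ord.
by move=> ab; rewrite mem_filter ab allpairs_f.
Qed.

Lemma twin_candidates_complete B (a b : V) :
  {in B, forall p, L p.1 != L p.2} -> a != b ->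
  perm_eq (tile_at E lab a) (tile_at E lab b) ->
  exists2 x, x \in twin_candidates E B &
    perm_eq [:: x.1.1; x.1.2] [:: a; b] /\ labels_agree lab x.2.
Proof.
move=> LB; wlog ab : a b / a < b.
  move=> twin; case: (ltngtP a b) => [ab|ba|/val_inj->]; first exact: twin;
    last by rewrite eqxx.
  rewrite eq_sym perm_sym => ne tab; have [x xT [xba agree]] := twin b a ba ne tab.
  exists x => //; split=> //; apply: perm_trans xba _.
  by rewrite -[[:: b; a]]/([:: b] ++ [:: a]) perm_catC.
move=> _; rewrite !tile_at_halves => /matchings_perm_map[c cab agree].
exists ((a, b), c); last by split.
rewrite mem_filter (refutes_sound _ LB agree) /=.
by apply: allpairs_f_dep; first exact: mem_vertex_pairs.
Qed.

Lemma no_three_twins :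
  (forall H : seq (V * V), realizes P H -> mg_iso H E) -> design_in E lab P ->
  ~~ degenerate_graph E -> three_twins_refuted E ->
  ~ exists a1 b1 a2 b2 a3 b3 : V,
      [/\ uniq [:: a1; b1; a2; b2; a3; b3],
          perm_eq (tile_at E lab a1) (tile_at E lab b1),
          perm_eq (tile_at E lab a2) (tile_at E lab b2) &
          perm_eq (tile_at E lab a3) (tile_at E lab b3)].
Proof.
move=> isoE dE ndE refuted [a1 [b1 [a2 [b2 [a3 [b3 [uniq6 t1 t2 t3]]]]]]].
have LB := forbidden_pairs_labels isoE dE ndE.
have [ne1 ne2 ne3] : [/\ a1 != b1, a2 != b2 & a3 != b3].
  have head_neq (x y : V) s : x \notin y :: s -> x != y.
    by rewrite inE negb_or => /andP[].
  by move: (uniq6) => /= /and5P[/head_neq ? _ /head_neq ? _ /andP[/head_neq ? _]].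
have [x1 x1T [x1ab agree1]] := twin_candidates_complete LB ne1 t1.
have [x2 x2T [x2ab agree2]] := twin_candidates_complete LB ne2 t2.
have [x3 x3T [x3ab agree3]] := twin_candidates_complete LB ne3 t3.
move/allP/(_ _ x1T)/allP/(_ _ x2T)/allP/(_ _ x3T): refuted.
have -> : uniq [:: x1.1.1; x1.1.2; x2.1.1; x2.1.2; x3.1.1; x3.1.2].
  by rewrite (perm_uniq (perm_cat x1ab (perm_cat x2ab x3ab))).
apply/negP; apply: (refutes_sound _ LB) => p.
by rewrite !mem_cat => /or3P[/agree1|/agree2|/agree3].
Qed.

End Twins.

Definition cube_pairs : seq (nat * nat) := [:: (0,1); (0,2); (0,4); (1,3); (1,5);
  (2,3); (2,6); (3,7); (4,5); (4,6); (5,7); (6,7)].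

(* [inord] does not reduce under [vm_compute] (it matches on the opaque [idP]). *)
Definition cube : seq ('I_8 * 'I_8) := [seq (inZp p.1, inZp p.2) | p <- cube_pairs].

Lemma Q3_cube : Q3 = cube.
Proof.
apply/eq_in_map => -[x y] xy_cube.
have cube_pairs8 : all (fun p => (p.1 < 8) && (p.2 < 8)) cube_pairs by [].
have /andP[x8 y8] := allP cube_pairs8 _ xy_cube.
by congr pair; apply: val_inj; rewrite /= inordK // modn_small.
Qed.

Lemma cube_nondegenerate : ~~ degenerate_graph cube.
Proof. by vm_compute. Qed.

Lemma cube_three_twins_refuted : three_twins_refuted cube.
Proof. by vm_compute. Qed.

Theorem lemma6 (S : eqType) (P : seq (tile S)) (lab : nat -> cend S) :
  is_pot P -> scenario3 P Q3 -> design_in Q3 lab P ->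
  ~ exists a1 b1 a2 b2 a3 b3 : 'I_8,
      [/\ uniq [:: a1; b1; a2; b2; a3; b3],
          perm_eq (tile_at Q3 lab a1) (tile_at Q3 lab b1),
          perm_eq (tile_at Q3 lab a2) (tile_at Q3 lab b2) &
          perm_eq (tile_at Q3 lab a3) (tile_at Q3 lab b3)].
Proof.
rewrite Q3_cube => _ [_ [_ iso_cube]] design_cube.
exact: no_three_twins iso_cube design_cube cube_nondegenerate cube_three_twins_refuted.
Qed.
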